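(* The extended Schr\''odinger-Virasoro algebra $\hat{\mathfrak{so}}$ has no nontrivial $\frac12$-derivations; i.e., every $\frac12$-derivation of $\hat{\mathfrak{so}}$ is a scalar multiple of the identity map.
   Context: The extended Schr\''odinger-Virasoro algebra $\hat{\mathfrak{so}}$ is the complex Lie algebra with basis $\{L_n,M_n,N_n,Y_{n+\frac12},C_L,C_{LN},C_N\mid n\in\mathbb{Z}\}$ and brackets (all others zero, $C_L,C_{LN},C_N$ central): $[L_m,L_n]=(n-m)L_{m+n}+\delta_{m+n,0}\frac{m^3-m}{12}C_L$, $[L_m,M_n]=nM_{m+n}$, $[L_m,N_n]=nN_{m+n}+\delta_{m+n,0}(m^2-m)C_{LN}$, $[N_m,M_n]=2M_{m+n}$, $[L_m,Y_{n+\frac12}]=(n+\frac{1-m}{2})Y_{m+n+\frac12}$, $[N_m,Y_{n+\frac12}]=Y_{m+n+\frac12}$, $[Y_{m+\frac12},Y_{n+\frac12}]=(m-n)M_{m+n+1}$, $[N_m,N_n]=n\delta_{m+n,0}C_N$, for all $m,n\in\mathbb{Z}$. A $\frac12$-derivation of a Lie algebra $L$ is a linear map $\varphi:L\to L$ with $\varphi([x,y])=\frac12([\varphi(x),y]+[x,\varphi(y)])$ for all $x,y$; it is trivial if it is multiplication by a scalar. *)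

From HB Require Import structures.
From mathcomp Require Import all_boot all_algebra.
From mathcomp Require Import complex Rstruct.
From mathcomp Require Import finmap.
From mathcomp.multinomials Require Import monalg.

Set Implicit Arguments.
Unset Strict Implicit.
Unset Printing Implicit Defensive.

Import GRing.Theory.
Local Open Scope ring_scope.

Definition C : fieldType := complex Rdefinitions.R.

(* Basis of so^ :  bL n = L_n, bM n = M_n, bN n = N_n,
   bY n = Y_{n+1/2}, bCL = C_L, bCLN = C_{LN}, bCN = C_N. *)
Inductive sob : Type :=
| bL of int | bM of int | bN of int | bY of int | bCL | bCLN | bCN.

Definition sob_enc (b : sob) : nat * int :=
  match b with
  | bL n => (0%N, n) | bM n => (1%N, n) | bN n => (2%N, n) | bY n => (3%N, n)
  | bCL => (4%N, 0) | bCLN => (5%N, 0) | bCN => (6%N, 0)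
  end.

Definition sob_dec (p : nat * int) : option sob :=
  match p with
  | (0, n) => Some (bL n) | (1, n) => Some (bM n) | (2, n) => Some (bN n)
  | (3, n) => Some (bY n) | (4, _) => Some bCL | (5, _) => Some bCLN
  | (6, _) => Some bCN | _ => None
  end%N.

Lemma sob_encK : pcancel sob_enc sob_dec.
Proof. by case. Qed.

HB.instance Definition _ := Countable.copy sob (pcan_type sob_encK).

Definition so : lmodType C := {malg C[sob]}.

Definition bv (b : sob) : so := << b >>.

Definition delta0 (k : int) : C := if k == 0 then 1 else 0.

Definition ic (k : int) : C := k%:~R.

Definition br (a b : sob) : so :=
  match a, b with
  | bL m, bL n => ic (n - m) *: bv (bL (m + n))
                  + (delta0 (m + n) * (ic (m ^+ 3 - m) / 12%:R)) *: bv bCL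
  | bL m, bM n => ic n *: bv (bM (m + n))
  | bM n, bL m => - (ic n *: bv (bM (m + n)))
  | bL m, bN n => ic n *: bv (bN (m + n))
                  + (delta0 (m + n) * ic (m ^+ 2 - m)) *: bv bCLN
  | bN n, bL m => - (ic n *: bv (bN (m + n))
                  + (delta0 (m + n) * ic (m ^+ 2 - m)) *: bv bCLN)
  | bN m, bM n => 2%:R *: bv (bM (m + n))
  | bM n, bN m => - (2%:R *: bv (bM (m + n)))
  | bL m, bY n => (ic n + ic (1 - m) / 2%:R) *: bv (bY (m + n))
  | bY n, bL m => - ((ic n + ic (1 - m) / 2%:R) *: bv (bY (m + n)))
  | bN m, bY n => bv (bY (m + n))
  | bY n, bN m => - bv (bY (m + n))
  | bY m, bY n => ic (m - n) *: bv (bM (m + n + 1))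
  | bN m, bN n => (ic n * delta0 (m + n)) *: bv bCN
  | _, _ => 0
  end.

Definition lie (x y : so) : so :=
  \sum_(a <- msupp x) \sum_(b <- msupp y) (x@_a * y@_b) *: br a b.

Definition half_derivation (phi : so -> so) : Prop :=
  forall x y : so, phi (lie x y) = 2%:R^-1 *: (lie (phi x) y + lie x (phi y)).

Definition trivial_map (phi : so -> so) : Prop :=
  exists c : C, forall x : so, phi x = c *: x.

(* [ad L_0] is diagonal on the basis, with eigenvalue [deg2 b / 2] on [b], and
   the bracket is graded by [deg2].  The half-derivation identity for
   [[L_0, b]] expresses [ad (phi L_0)] on [b] through the coefficients of
   [phi b]; testing it on well-chosen [b] shows that [phi L_0] is [c L_0] plus
   a central vector, so [ad (phi L_0) = c ad L_0].  Fed back into the same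
   identity, this gives [phi b = c b] up to a component of degree
   [2 deg2 b] when [deg2 b <> 0], and that component vanishes once [b] is
   written as a bracket of two basis vectors of nonzero degree.  Finally the
   degree-zero basis vectors are, modulo vectors already handled, brackets of
   vectors of nonzero degree, and the half-derivation identity maps brackets
   of [c]-eigenvectors to [c]-eigenvectors. *)
From mathcomp Require Import all_boot all_algebra.
From mathcomp Require Import complex Rstruct.
From mathcomp.multinomials Require Import monalg.
From mathcomp Require Import finmap zify ring.
Import GRing.Theory Num.Theory.
Local Open Scope ring_scope.

(* C is declared as a mere [fieldType]; its numeric structure is that of
   [complex R], which is why these facts name that type explicitly. *)
Lemma natC_neq0 n : (n.+1%:R : C) != 0.
Proof. by rewrite (@pnatr_eq0 (complex Rdefinitions.R)). Qed.

Lemma ic_eq0 (k : int) : (ic k == 0) = (k == 0).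
Proof. exact: (@intr_eq0 (complex Rdefinitions.R)). Qed.

Lemma ic0 : ic 0 = 0.
Proof. exact: mulr0z. Qed.

Lemma two_neq0 : (2 : C) != 0.
Proof. exact: natC_neq0. Qed.

Lemma ic_half_neq0 {k : int} : k != 0 -> ic k / 2 != 0.
Proof. by move=> k0; rewrite mulf_neq0 ?invr_neq0 ?ic_eq0 ?two_neq0. Qed.

Lemma ic_half_eq j k : (ic j / 2 == ic k / 2) = (j == k).
Proof.
by rewrite (can_eq (divfK two_neq0)) /ic (@eqr_int (complex Rdefinitions.R)).
Qed.

Lemma eq_mull_neq_eq0 {a b p q : C} : q = a * p -> q = b * p -> a != b -> p = 0.
Proof.
move=> -> /eqP; rewrite -subr_eq0 -mulrBl mulf_eq0 subr_eq0 => /orP[/eqP ab|/eqP //].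
by rewrite ab eqxx.
Qed.

Lemma half_double (x : C) : x = (x + x) / 2.
Proof. by rewrite -mulr2n -[x *+ 2]mulr_natr mulfK ?two_neq0. Qed.

Lemma scale_half_double (v : so) : 2^-1 *: (v + v) = v.
Proof.
have half_half : 2^-1 + 2^-1 = 1 :> C by field.
by rewrite scalerDr -scalerDl half_half scale1r.
Qed.

Lemma sum_msupp_coef1 {K : choiceType} {R : nzRingType} {u : {malg R[K]}}
    {F : K -> R} a0 :
  {in msupp u, forall a, a != a0 -> F a = 0} ->
  \sum_(a <- msupp u) u@_a * F a = u@_a0 * F a0.
Proof.
move=> F0; have [u_a0|u_a0] := boolP (a0 \in msupp u).
  rewrite (big_fsetD1 a0) //= big1_fset ?addr0 // => a.
  by rewrite in_fsetD1 => /andP[a_a0 u_a] _; rewrite F0 ?mulr0.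
rewrite mcoeff_outdom // mul0r big1_fset // => a u_a _.
by rewrite F0 ?mulr0 //; apply: contraNneq u_a0 => <-.
Qed.

Lemma bv_coef a e : (bv a)@_e = (a == e)%:R.
Proof. by rewrite mcoeffU. Qed.

Lemma msupp_bv b : msupp (bv b) = [fset b]%fset.
Proof. by rewrite msuppU oner_eq0. Qed.

Lemma so_expand (x : so) : x = \sum_(k <- msupp x) x@_k *: bv k.
Proof.
rewrite {1}[x]monalgE; apply: eq_bigr => k _; apply/malgP => e.
by rewrite mcoeffU mcoeffZ bv_coef mulr_natr.
Qed.

Lemma linear_so_eq_scale (f : {linear so -> so}) k :
  (forall b, f (bv b) = k *: bv b) -> forall x, f x = k *: x.
Proof.
move=> fb x; rewrite [x]so_expand linear_sum scaler_sumr; apply: eq_bigr => b _.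
by rewrite linearZ_LR fb !scalerA mulrC.
Qed.

(* Rewriting with
   whole shapes matters: with [mcoeffZ] alone, [rewrite] compares unrelated
   scalars of [C] (or vectors of [so]) by conversion, which takes tens of
   seconds; the contextual patterns of several rewrites below avoid the same
   comparisons. *)
Lemma coef_scale_bv c a e : (c *: bv a)@_e = c * (a == e)%:R.
Proof. by rewrite mcoeffZ bv_coef. Qed.

Lemma coef_add_scale_bv c d a b e :
  (c *: bv a + d *: bv b)@_e = c * (a == e)%:R + d * (b == e)%:R.
Proof. by rewrite mcoeffD; congr (_ + _); apply: coef_scale_bv. Qed.

Lemma coef_opp_scale_bv c a e : (- (c *: bv a))@_e = - (c * (a == e)%:R).
Proof. by rewrite mcoeffN coef_scale_bv. Qed.

Lemma coef_opp_add_scale_bv c d a b e :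
  (- (c *: bv a + d *: bv b))@_e = - (c * (a == e)%:R + d * (b == e)%:R).
Proof. by rewrite mcoeffN coef_add_scale_bv. Qed.

Lemma coef_opp_bv a e : (- bv a)@_e = - (a == e)%:R.
Proof. by rewrite mcoeffN bv_coef. Qed.

Definition br_coefE := (coef_opp_add_scale_bv, coef_add_scale_bv,
  coef_opp_scale_bv, coef_scale_bv, coef_opp_bv, bv_coef,
  mcoeff0 : forall e, (0 : so)@_e = 0).

Lemma lie_bv a b : lie (bv a) (bv b) = br a b.
Proof. by rewrite /lie !msupp_bv !big_seq_fset1 !bv_coef !eqxx mulr1 scale1r. Qed.

Lemma lie_bvr_coef (u : so) b e :
  (lie u (bv b))@_e = \sum_(a <- msupp u) u@_a * (br a b)@_e.
Proof.
rewrite /lie raddf_sum /=; apply: eq_bigr => a _.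
by rewrite msupp_bv big_seq_fset1 bv_coef eqxx mulr1 mcoeffZ.
Qed.

Lemma lie_bvl_coef (u : so) a e :
  (lie (bv a) u)@_e = \sum_(f <- msupp u) u@_f * (br a f)@_e.
Proof.
rewrite /lie msupp_bv big_seq_fset1 raddf_sum /=; apply: eq_bigr => f _.
by rewrite bv_coef eqxx mul1r mcoeffZ.
Qed.

Lemma lie_scaler_bv c a b : lie (c *: bv a) (bv b) = c *: br a b.
Proof.
apply/malgP => e; rewrite lie_bvr_coef (sum_msupp_coef1 a).
  by rewrite coef_scale_bv eqxx mulr1 mcoeffZ.
move=> f /(fsubsetP (msuppZ_le _ _)).
by rewrite msupp_bv inE => ->.
Qed.

Lemma lie_bv_scaler c a b : lie (bv a) (c *: bv b) = c *: br a b.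
Proof.
apply/malgP => e; rewrite lie_bvl_coef (sum_msupp_coef1 b).
  by rewrite coef_scale_bv eqxx mulr1 mcoeffZ.
move=> f /(fsubsetP (msuppZ_le _ _)).
by rewrite msupp_bv inE => ->.
Qed.

(* Twice the [ad L_0]-eigenvalue, so that it is integral on the [Y]'s. *)
Definition deg2 (b : sob) : int :=
  match b with
  | bL n | bM n | bN n => n + n
  | bY n => n + n + 1
  | _ => 0
  end.

Lemma deg2_neqF a e : deg2 a != deg2 e -> (a == e) = false.
Proof. by apply: contraNF => /eqP ->. Qed.

Definition homog d (x : so) := forall e, deg2 e != d -> x@_e = 0.

Lemma homog0 d : homog d 0.
Proof. by move=> e _; rewrite mcoeff0. Qed.

Lemma homog_bv d b : deg2 b = d -> homog d (bv b).
Proof. by move=> <- e e_b; rewrite bv_coef deg2_neqF // eq_sym. Qed.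

Lemma homogD d x y : homog d x -> homog d y -> homog d (x + y).
Proof. by move=> hx hy e e_d; rewrite mcoeffD hx ?hy ?addr0. Qed.

Lemma homogN d x : homog d x -> homog d (- x).
Proof. by move=> hx e e_d; rewrite mcoeffN hx ?oppr0. Qed.

Lemma homogZ d c x : homog d x -> homog d (c *: x).
Proof. by move=> hx e e_d; rewrite mcoeffZ hx ?mulr0. Qed.

Lemma homogZ_delta0l d k c x :
  (k = 0 -> homog d x) -> homog d ((delta0 k * c) *: x).
Proof.
rewrite /delta0; case: eqP => [k0 hx|_ _]; first by rewrite mul1r; apply/homogZ/hx.
by rewrite mul0r scale0r; apply: homog0.
Qed.

Lemma homogZ_delta0r d k c x :
  (k = 0 -> homog d x) -> homog d ((c * delta0 k) *: x).
Proof. by rewrite mulrC; apply: homogZ_delta0l. Qed.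

Lemma br_homog a b : homog (deg2 a + deg2 b) (br a b).
Proof.
case: a => [m|m|m|m|||]; case: b => [n|n|n|n|||]; rewrite /br;
  repeat match goal with
  | |- homog _ (_ + _) => apply: homogD
  | |- homog _ (- _) => apply: homogN
  | |- homog _ ((delta0 _ * _) *: _) => apply: homogZ_delta0l => ?
  | |- homog _ ((_ * delta0 _) *: _) => apply: homogZ_delta0r => ?
  | |- homog _ (_ *: _) => apply: homogZ
  | |- homog _ (bv _) => apply: homog_bv
  | |- homog _ 0 => apply: homog0
  end; rewrite /=; lia.
Qed.

Lemma br_coef_graded a b e : deg2 e != deg2 a + deg2 b -> (br a b)@_e = 0.
Proof. exact: br_homog. Qed.

Lemma br_L0 b : br (bL 0) b = (ic (deg2 b) / 2) *: bv b.
Proof.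
have ic_double k : ic (k + k) / 2 = ic k by rewrite /ic intrD -half_double.
case: b => [n|n|n|n|||] /=; rewrite /br.
- by rewrite (add0r n) (subr0 n) (_ : 0 ^+ 3 - 0 = 0 :> int) // ic0 mul0r mulr0
    scale0r addr0 ic_double.
- by rewrite (add0r n) ic_double.
- by rewrite (add0r n) (_ : 0 ^+ 2 - 0 = 0 :> int) // ic0 mulr0 scale0r addr0
    ic_double.
- by rewrite (add0r n) (subr0 1) /ic !intrD mulrDl -half_double.
all: by rewrite ic0 mul0r scale0r.
Qed.

Lemma lie_L0_coef (u : so) e : (lie (bv (bL 0)) u)@_e = ic (deg2 e) / 2 * u@_e.
Proof.
rewrite lie_bvl_coef (sum_msupp_coef1 e) => [|f _ f_e].
  by rewrite br_L0 coef_scale_bv eqxx mulr1 mulrC.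
by rewrite br_L0 coef_scale_bv (negbTE f_e) !mulr0.
Qed.

Lemma eq_sobE (x y : sob) : (x == y) = (sob_enc x == sob_enc y).
Proof. by []. Qed.

Ltac br_coef_simpl :=
  rewrite /br ?br_coefE ?eq_sobE ?xpair_eqE /=;
  repeat match goal with |- context[(?x == ?y :> int)] => case: (x =P y) => ? end;
  try (exfalso; lia);
  rewrite ?(mulr0, mul0r, oppr0, addr0, add0r, mulr1, mul1r, subr0).

Ltac br_coef_off :=
  move=> [m|m|m|m|||] a_supp; rewrite ?eq_sobE ?xpair_eqE /= => ?; br_coef_simpl.

Section HalfDerivation.

Variable phi : {linear so -> so}.
Hypothesis phi_half : half_derivation phi.

Local Notation D0 := (phi (bv (bL 0))).
Local Notation c0 := (D0@_(bL 0)).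

Lemma half_derivation_coef a b e :
  (phi (br a b))@_e = 2^-1 * ((lie (phi (bv a)) (bv b))@_e + (lie (bv a) (phi (bv b)))@_e).
Proof. by rewrite -lie_bv phi_half mcoeffZ mcoeffD. Qed.

Lemma lie_D0_coef b e :
  (lie D0 (bv b))@_e = ic (deg2 b + deg2 b - deg2 e) / 2 * (phi (bv b))@_e.
Proof.
have := half_derivation_coef (bL 0) b e.
rewrite br_L0 linearZ_LR mcoeffZ [X in _ + X]lie_L0_coef /ic intrB intrD => E.
have -> : (lie D0 (bv b))@_e =
    2 * ((deg2 b)%:~R / 2 * (phi (bv b))@_e) - (deg2 e)%:~R / 2 * (phi (bv b))@_e.
  by rewrite E mulrA divff ?two_neq0 // mul1r addrK.
by field.
Qed.

Lemma lie_D0_coef_top b e : deg2 e = deg2 b + deg2 b -> (lie D0 (bv b))@_e = 0.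
Proof. by move=> e_bb; rewrite lie_D0_coef e_bb subrr ic0 !mul0r. Qed.

Lemma D0_coef_M j : D0@_(bM j) = 0.
Proof.
have := @lie_D0_coef_top (bN j) (bM (j + j)) erefl.
rewrite lie_bvr_coef (sum_msupp_coef1 (bM j)); last by br_coef_off.
have -> : (br (bM j) (bN j))@_(bM (j + j)) = -2 by br_coef_simpl.
by move/eqP; rewrite mulf_eq0 oppr_eq0 (negbTE two_neq0) orbF => /eqP.
Qed.

Lemma D0_coef_N j : D0@_(bN j) = 0.
Proof.
have [->|j0] := eqVneq j 0.
  have := @lie_D0_coef_top (bM 0) (bM 0) erefl.
  rewrite lie_bvr_coef (sum_msupp_coef1 (bN 0)); last by br_coef_off.
  have -> : (br (bN 0) (bM 0))@_(bM 0) = 2 by br_coef_simpl.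
  by move/eqP; rewrite mulf_eq0 (negbTE two_neq0) orbF => /eqP.
have := @lie_D0_coef_top (bL j) (bN (j + j)) erefl.
rewrite lie_bvr_coef (sum_msupp_coef1 (bN j)); last by br_coef_off.
have -> : (br (bN j) (bL j))@_(bN (j + j)) = - ic j by br_coef_simpl.
by move/eqP; rewrite mulf_eq0 oppr_eq0 ic_eq0 (negbTE j0) orbF => /eqP.
Qed.

Lemma D0_coef_L j : j != 0 -> D0@_(bL j) = 0.
Proof.
move=> j0; have := @lie_D0_coef_top (bM j) (bM (j + j)) erefl.
rewrite lie_bvr_coef (sum_msupp_coef1 (bL j)); last first.
  br_coef_off; try by [].
  by move: a_supp; rewrite (_ : m = j) -?mcoeff_neq0 ?D0_coef_N ?eqxx //; lia.
have -> : (br (bL j) (bM j))@_(bM (j + j)) = ic j by br_coef_simpl.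
by move/eqP; rewrite mulf_eq0 ic_eq0 (negbTE j0) orbF => /eqP.
Qed.

(* The [ad D0]-equations of [N_0] at [Y_n] and of [N_1] at [Y_(n+1)] share
   the coefficient of [D0] at [Y_n]; [[N_0, N_1] = 0] identifies the two
   coefficients of [phi] they involve. *)
Lemma D0_coef_Y n : D0@_(bY n) = 0.
Proof.
set y := D0@_(bY n).
set p0 := (phi (bv (bN 0)))@_(bY n).
have Y_N j : (br (bY n) (bN j))@_(bY (n + j)) = -1 by br_coef_simpl.
have E0 : - y = ic (deg2 (bN 0) + deg2 (bN 0) - deg2 (bY n)) / 2 * p0.
  have := lie_D0_coef (bN 0) (bY n).
  rewrite lie_bvr_coef (sum_msupp_coef1 (bY n)); last by br_coef_off.
  by rewrite -{2}[n]addr0 Y_N addr0 mulrN1.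
have p1_p0 : (phi (bv (bN 1)))@_(bY (n + 1)) = p0.
  have := half_derivation_coef (bN 0) (bN 1) (bY (n + 1)).
  rewrite (_ : br _ _ = 0); last by rewrite /br /delta0 /= mulr0 scale0r.
  rewrite [in X in X = _]linear0 [X in X = _]mcoeff0.
  rewrite [X in _ + X]lie_bvl_coef (sum_msupp_coef1 (bY (n + 1))); last by br_coef_off.
  rewrite [X in X + _]lie_bvr_coef (sum_msupp_coef1 (bY n)); last by br_coef_off.
  have -> : (br (bN 0) (bY (n + 1)))@_(bY (n + 1)) = 1 by br_coef_simpl.
  rewrite Y_N mulr1 mulrN1 => /esym/eqP.
  by rewrite mulf_eq0 invr_eq0 (negbTE two_neq0) addrC subr_eq0 => /eqP.
have E1 : - y = ic (deg2 (bN 1) + deg2 (bN 1) - deg2 (bY (n + 1))) / 2 * p0.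
  have := lie_D0_coef (bN 1) (bY (n + 1)).
  rewrite lie_bvr_coef (sum_msupp_coef1 (bY n)); last by br_coef_off.
  by rewrite Y_N mulrN1 p1_p0.
have p0_0 : p0 = 0 by apply: (eq_mull_neq_eq0 E0 E1); rewrite ic_half_eq /=; lia.
by move/eqP: E0; rewrite p0_0 mulr0 oppr_eq0 => /eqP.
Qed.

Lemma br_D0_supp a b : a \in msupp D0 -> a != bL 0 -> br a b = 0.
Proof.
case: a => [m|m|m|m|||] D0_a a_L0; try by case: b.
all: move: D0_a; rewrite -mcoeff_neq0.
- by rewrite D0_coef_L ?eqxx //; apply: contraNneq a_L0 => ->.
- by rewrite D0_coef_M eqxx.
- by rewrite D0_coef_N eqxx.
- by rewrite D0_coef_Y eqxx.
Qed.

Lemma lie_D0 b : lie D0 (bv b) = c0 *: br (bL 0) b.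
Proof.
apply/malgP => e; rewrite lie_bvr_coef (sum_msupp_coef1 (bL 0)) ?mcoeffZ //.
by move=> a D0_a a_L0; rewrite br_D0_supp // mcoeff0.
Qed.

Lemma phi_bv_coef b e : deg2 b != 0 -> deg2 e != deg2 b + deg2 b ->
  (phi (bv b))@_e = c0 * (b == e)%:R.
Proof.
move=> b0 e_bb; have := lie_D0_coef b e.
rewrite lie_D0 br_L0 [X in X = _]mcoeffZ coef_scale_bv.
have [<-|b_e] := eqVneq b e.
  rewrite (_ : _ - _ = deg2 b); last by lia.
  by rewrite !mulr1 mulrC => /(mulfI (ic_half_neq0 b0)) ->.
rewrite !mulr0 => /esym/eqP; rewrite mulf_eq0 (negbTE (ic_half_neq0 _)) //=.
  by move/eqP.
by apply: contra e_bb => /eqP ?; apply/eqP; lia.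
Qed.

Lemma phi_bv_coef_eq0 b f :
  deg2 b != 0 -> deg2 f != deg2 b -> deg2 f != deg2 b + deg2 b ->
  (phi (bv b))@_f = 0.
Proof. by move=> b0 f_b f_bb; rewrite phi_bv_coef // deg2_neqF ?mulr0 // eq_sym. Qed.

Lemma lie_phi_bv_coef_top a1 a2 e :
  deg2 a1 != 0 -> deg2 a2 != 0 -> deg2 a1 + deg2 a2 != 0 ->
  deg2 e = (deg2 a1 + deg2 a2) + (deg2 a1 + deg2 a2) ->
  (lie (phi (bv a1)) (bv a2))@_e = 0 /\ (lie (bv a1) (phi (bv a2)))@_e = 0.
Proof.
move=> a1_0 a2_0 a12_0 e_top; split.
  rewrite lie_bvr_coef big1_seq // => f _.
  have [f1|f1] := eqVneq (deg2 f) (deg2 a1).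
    by rewrite br_coef_graded ?mulr0 //; lia.
  have [f11|f11] := eqVneq (deg2 f) (deg2 a1 + deg2 a1).
    by rewrite br_coef_graded ?mulr0 //; lia.
  by rewrite phi_bv_coef_eq0 ?mul0r.
rewrite lie_bvl_coef big1_seq // => f _.
have [f2|f2] := eqVneq (deg2 f) (deg2 a2).
  by rewrite br_coef_graded ?mulr0 //; lia.
have [f22|f22] := eqVneq (deg2 f) (deg2 a2 + deg2 a2).
  by rewrite br_coef_graded ?mulr0 //; lia.
by rewrite phi_bv_coef_eq0 ?mul0r.
Qed.

(* The coefficients of [phi b] in degree [2 deg2 b] vanish by the
   half-derivation identity for the bracket [[a1, a2]]. *)
Lemma phi_bv_of_br a1 a2 b l :
  br a1 a2 = l *: bv b -> l != 0 -> deg2 a1 != 0 -> deg2 a2 != 0 -> deg2 b != 0 ->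
  phi (bv b) = c0 *: bv b.
Proof.
move=> a12_b l0 a1_0 a2_0 b0.
have b_deg : deg2 b = deg2 a1 + deg2 a2.
  apply/eqP; apply: contraNT l0 => /(br_coef_graded a1 a2).
  by rewrite a12_b coef_scale_bv eqxx mulr1 => ->.
apply/malgP => e; rewrite coef_scale_bv.
have [e_top|e_top] := eqVneq (deg2 e) (deg2 b + deg2 b); last exact: phi_bv_coef.
rewrite deg2_neqF ?mulr0; last by rewrite e_top; lia.
have [top1 top2] : (lie (phi (bv a1)) (bv a2))@_e = 0 /\ (lie (bv a1) (phi (bv a2)))@_e = 0.
  by apply: lie_phi_bv_coef_top => //; rewrite -?b_deg -?e_top //; lia.
have : l * (phi (bv b))@_e = 0.
  rewrite -mcoeffZ -linearZ_LR -a12_b half_derivation_coef.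
  by rewrite [X in _ * (X + _)]top1 [X in _ * (_ + X)]top2 addr0 mulr0.
by move/eqP; rewrite mulf_eq0 (negbTE l0) => /eqP.
Qed.

Lemma phi_bv_deg_neq0 b : deg2 b != 0 -> phi (bv b) = c0 *: bv b.
Proof.
case: b => [n|n|n|n|||] //= b0.
- apply: (@phi_bv_of_br (bL (- n)) (bL (n + n)) _ (ic (n + n - - n))) => /=; try lia.
    rewrite /br (_ : - n + (n + n) = n); last by lia.
    by rewrite /delta0 ifN ?mul0r ?scale0r ?addr0 //; lia.
  by rewrite ic_eq0; lia.
- apply: (@phi_bv_of_br (bN (- n)) (bM (n + n)) _ 2) => /=; try lia.
    by rewrite /br (_ : - n + (n + n) = n) //; lia.
  exact: two_neq0.
- apply: (@phi_bv_of_br (bL (- n)) (bN (n + n)) _ (ic (n + n))) => /=; try lia.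
    rewrite /br (_ : - n + (n + n) = n); last by lia.
    by rewrite /delta0 ifN ?mul0r ?scale0r ?addr0 //; lia.
  by rewrite ic_eq0; lia.
- apply: (@phi_bv_of_br (bN 1) (bY (n - 1)) _ 1) => /=; try lia.
    by rewrite /br (_ : 1 + (n - 1) = n) ?scale1r //; lia.
  exact: oner_neq0.
Qed.

Lemma phi_br_eigen {k : C} {a1 a2 : sob} :
  phi (bv a1) = k *: bv a1 -> phi (bv a2) = k *: bv a2 ->
  phi (br a1 a2) = k *: br a1 a2.
Proof.
move=> phi_a1 phi_a2; rewrite -[in LHS]lie_bv phi_half phi_a1 phi_a2.
rewrite [X in _ *: (X + _)]lie_scaler_bv [X in _ *: (_ + X)]lie_bv_scaler.
exact: scale_half_double.
Qed.

Lemma phi_scale_eigen {k : C} {x : so} l :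
  phi x = k *: x -> phi (l *: x) = k *: (l *: x).
Proof.
by move=> phi_x; rewrite linearZ_LR phi_x !scalerA; congr (_ *: _); apply: mulrC.
Qed.

Lemma phi_bv_of_br_sum k a1 a2 w l b :
  phi (bv a1) = k *: bv a1 -> phi (bv a2) = k *: bv a2 -> phi w = k *: w ->
  br a1 a2 = w + l *: bv b -> l != 0 -> phi (bv b) = k *: bv b.
Proof.
move=> phi_a1 phi_a2 phi_w a12_b l0; have := phi_br_eigen phi_a1 phi_a2.
rewrite a12_b linearD linearZ_LR phi_w scalerDr => /addrI.
by rewrite scalerA mulrC -scalerA => /(scalerI l0).
Qed.

Lemma phi_L0 : phi (bv (bL 0)) = c0 *: bv (bL 0).
Proof.
apply: (@phi_bv_of_br_sum c0 (bL 1) (bL (-1)) 0 (ic (-2))).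
- exact: phi_bv_deg_neq0.
- exact: phi_bv_deg_neq0.
- by rewrite linear0 scaler0.
- by rewrite /br /delta0 /= -[1 ^+ 3 - 1]/(0 : int) ic0 mul0r mulr0 scale0r addr0 add0r.
- by rewrite ic_eq0.
Qed.

Lemma phi_N0 : phi (bv (bN 0)) = c0 *: bv (bN 0).
Proof.
apply: (@phi_bv_of_br_sum c0 (bL 1) (bN (-1)) 0 (ic (-1))).
- exact: phi_bv_deg_neq0.
- exact: phi_bv_deg_neq0.
- by rewrite linear0 scaler0.
- by rewrite /br /delta0 /= -[1 ^+ 2 - 1]/(0 : int) ic0 mulr0 scale0r addr0 add0r.
- by rewrite ic_eq0.
Qed.

Lemma phi_M0 : phi (bv (bM 0)) = c0 *: bv (bM 0).
Proof.
apply: (@phi_bv_of_br_sum c0 (bN 1) (bM (-1)) 0 2).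
- exact: phi_bv_deg_neq0.
- exact: phi_bv_deg_neq0.
- by rewrite linear0 scaler0.
- by rewrite /br /= add0r.
- exact: two_neq0.
Qed.

Lemma phi_CN : phi (bv bCN) = c0 *: bv bCN.
Proof.
apply: (@phi_bv_of_br_sum c0 (bN (-1)) (bN 1) 0 (ic 1)).
- exact: phi_bv_deg_neq0.
- exact: phi_bv_deg_neq0.
- by rewrite linear0 scaler0.
- by rewrite /br /delta0 /= mulr1 add0r.
- by rewrite ic_eq0.
Qed.

Lemma phi_CL : phi (bv bCL) = c0 *: bv bCL.
Proof.
apply: (@phi_bv_of_br_sum c0 (bL 2) (bL (-2)) (ic (-4) *: bv (bL 0)) (ic 6 / 12)).
- exact: phi_bv_deg_neq0.
- exact: phi_bv_deg_neq0.
- exact: phi_scale_eigen phi_L0.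
- by rewrite /br /delta0 /= mul1r.
- by rewrite mulf_neq0 ?invr_neq0 ?ic_eq0 ?natC_neq0.
Qed.

Lemma phi_CLN : phi (bv bCLN) = c0 *: bv bCLN.
Proof.
apply: (@phi_bv_of_br_sum c0 (bL (-1)) (bN 1) (ic 1 *: bv (bN 0)) (ic 2)).
- exact: phi_bv_deg_neq0.
- exact: phi_bv_deg_neq0.
- exact: phi_scale_eigen phi_N0.
- by rewrite /br /delta0 /= mul1r.
- by rewrite ic_eq0.
Qed.

Lemma phi_bv b : phi (bv b) = c0 *: bv b.
Proof.
have [b0|] := eqVneq (deg2 b) 0; last exact: phi_bv_deg_neq0.
case: b b0 => [n|n|n|n|||] /= b0.
- by rewrite (_ : n = 0); [exact: phi_L0 | lia].
- by rewrite (_ : n = 0); [exact: phi_M0 | lia].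
- by rewrite (_ : n = 0); [exact: phi_N0 | lia].
- by lia.
- exact: phi_CL.
- exact: phi_CLN.
- exact: phi_CN.
Qed.

End HalfDerivation.

Theorem mainTheorem3 (phi : {linear so -> so}) :
  half_derivation phi -> trivial_map phi.
Proof.
move=> phi_half; exists ((phi (bv (bL 0)))@_(bL 0)).
exact/linear_so_eq_scale/phi_bv.
Qed.
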